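(* If $\pi\le\beta_1<\beta_2\le\beta_{cr}$, then $g(\beta_1,\theta)<g(\beta_2,\theta)$ for all $\theta\in(0,\pi/2]$.
   Context: $\beta_{cr}\in(\pi,2\pi)$ is the unique solution in $(\pi,2\pi)$ of $\tan\big(\frac{\beta_{cr}-\pi}{4}\big)=4\big(\Gamma(3/4)/\Gamma(1/4)\big)^2$. For $\pi\le\beta\le\beta_{cr}$, let $\psi_\beta$ be the function on $(0,\beta)$, symmetric about $\beta/2$, with $\psi_\beta(\theta)=\cos\big(\tfrac12(\beta/2-\theta)\big)$ for $\pi/2\le\theta\le\beta-\pi/2$, and which on $(0,\pi/2]$ solves $\psi''+\psi/(4\sin^2\theta)=0$ with $\psi(\pi/2)=\cos((\beta-\pi)/4)$, $\psi'(\pi/2)=\tfrac12\sin((\beta-\pi)/4)$; it is known that $\psi_\beta>0$ on $(0,\beta)$. Set $g(\beta,\theta)=\sin\theta\,\psi_\beta'(\theta)/\psi_\beta(\theta)$ for $0<\theta\le\pi/2$. *)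

From Stdlib Require Import Reals Lra Arith Factorial.
Open Scope R_scope.

Fixpoint poch_prod (x : R) (n : nat) : R :=
  match n with
  | O => x
  | S m => poch_prod x m * (x + INR (S m))
  end.

(* Gauss/Euler limit formula for the Gamma function (x > 0):
   Gamma x = lim_{n -> oo} n! n^x / (x (x+1) ... (x+n)). *)
Definition gamma_seq (x : R) (n : nat) : R :=
  INR (fact n) * Rpower (INR n) x / poch_prod x n.

Definition is_Gamma (x g : R) : Prop := Un_cv (gamma_seq x) g.

(* psi is (the restriction to (0, pi/2] of) psi_beta, with derivative dpsi:
   it solves psi'' + psi / (4 sin^2) = 0 on (0, pi/2], with the initial data
   at pi/2 given in the paper; also psi > 0 there (known fact). *)
Definition psi_sol (beta : R) (psi dpsi : R -> R) : Prop :=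
  (forall t, 0 < t <= PI / 2 ->
     derivable_pt_lim psi t (dpsi t) /\
     derivable_pt_lim dpsi t (- psi t / (4 * (sin t) ^ 2)) /\
     0 < psi t) /\
  psi (PI / 2) = cos ((beta - PI) / 4) /\
  dpsi (PI / 2) = / 2 * sin ((beta - PI) / 4).

Definition gfun (psi dpsi : R -> R) (t : R) : R :=
  sin t * dpsi t / psi t.

(* The function g = sin psi' / psi satisfies the Riccati equation
   sin g' = cos g - g^2 - 1/4, so the difference d = g2 - g1 of two solutions
   satisfies the linear equation d' = d h with h = (cos - g1 - g2) / sin, which
   is continuous on (0, pi/2].  A solution of a linear equation that vanishes
   somewhere vanishes at every later point (d^2 exp(-2 M x) is nonincreasing
   when h <= M).  Since g(beta, pi/2) = tan((beta - pi)/4) / 2 is increasing in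
   beta, d(pi/2) > 0, hence d stays positive on all of (0, pi/2]. *)
From Stdlib Require Import Reals Lra Ranalysis5.
Open Scope R_scope.

Section LinearODE.

Variables d h : R -> R.

Lemma linear_ode_zero_forward (a b : R) :
  a < b ->
  (forall c, a <= c <= b -> derivable_pt_lim d c (d c * h c)) ->
  (forall c, a <= c <= b -> continuity_pt h c) ->
  d a = 0 -> d b = 0.
Proof.
  intros Hab Hd Hh Ha.
  destruct (continuity_ab_maj h a b ltac:(lra) Hh) as [Mx [HM _]].
  set (M := h Mx) in HM.
  set (w := fun c => exp (-(2 * M * c))).
  set (k := fun c => d c * d c * w c).
  set (k' := fun c => 2 * (d c * d c) * w c * (h c - M)).
  assert (Hw : forall c, derivable_pt_lim w c (w c * (-(2 * M)))).
  { intro c. apply (derivable_pt_lim_comp (fun c => -(2 * M * c)) exp c).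
    - replace (-(2 * M)) with (-(2 * M * 1)) by ring.
      apply (derivable_pt_lim_opp (fun c => 2 * M * c)).
      apply (derivable_pt_lim_scal (fun c => c)), derivable_pt_lim_id.
    - apply derivable_pt_lim_exp. }
  assert (Hk : forall c, a <= c <= b -> derivable_pt_lim k c (k' c)).
  { intros c Hc.
    pose proof (derivable_pt_lim_mult (mult_fct d d) w c _ _
                 (derivable_pt_lim_mult d d c _ _ (Hd c Hc) (Hd c Hc)) (Hw c)) as Hm.
    replace (k' c) with ((d c * h c * d c + d c * (d c * h c)) * w c
                         + d c * d c * (w c * - (2 * M)))
      by (unfold k'; ring).
    exact Hm. }
  destruct (MVT_cor2 k k' a b Hab Hk) as [c [Hc Hc_in]].
  assert (Hk'c : k' c <= 0).
  { unfold k'. pose proof (HM c ltac:(lra)).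
    assert (0 <= d c * d c * w c).
    { apply Rmult_le_pos; [apply Rle_0_sqr | apply Rlt_le, exp_pos]. }
    nra. }
  assert (Hka : k a = 0) by (unfold k; rewrite Ha; ring).
  assert (Hkb : k b <= 0) by nra.
  pose proof (exp_pos (-(2 * M * b))) as Hwb. fold (w b) in Hwb.
  unfold k in Hkb.
  assert (d b * d b <= 0).
  { apply (Rmult_le_reg_r (w b)); [exact Hwb | lra]. }
  nra.
Qed.

Lemma linear_ode_pos_backward (a b : R) :
  a <= b ->
  (forall c, a <= c <= b -> derivable_pt_lim d c (d c * h c)) ->
  (forall c, a <= c <= b -> continuity_pt h c) ->
  0 < d b -> 0 < d a.
Proof.
  intros Hab Hd Hh Hb.
  destruct (Rlt_le_dec 0 (d a)) as [Hpos | Hnpos]; [exact Hpos |].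
  exfalso.
  assert (Hd_cont : forall c, a <= c <= b -> continuity_pt d c).
  { intros c Hc. apply derivable_continuous_pt. exact (exist _ _ (Hd c Hc)). }
  assert (Hab' : a < b).
  { destruct Hab as [Hlt | ->]; [exact Hlt | lra]. }
  assert (Hzero : exists s, a <= s < b /\ d s = 0).
  { destruct (Req_dec (d a) 0) as [E | E]; [exists a; split; [lra | exact E] |].
    destruct (IVT_interv d a b Hd_cont Hab' ltac:(lra) Hb) as [z [Hz Hdz]].
    exists z. split; [| exact Hdz].
    destruct (Req_dec z b) as [-> | ]; lra. }
  destruct Hzero as [s [Hs Hds]].
  pose proof (linear_ode_zero_forward s b ltac:(lra)
                (fun c Hc => Hd c ltac:(lra)) (fun c Hc => Hh c ltac:(lra)) Hds).
  lra.
Qed.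

End LinearODE.

Lemma sin_pos_on_half_pi (t : R) : 0 < t <= PI / 2 -> 0 < sin t.
Proof. intros Ht. apply sin_gt_0; pose proof PI_RGT_0; lra. Qed.

Section Riccati.

Variables (b : R) (psi dpsi : R -> R).
Hypothesis Hpsi : psi_sol b psi dpsi.

Lemma gfun_riccati (t : R) : 0 < t <= PI / 2 ->
  derivable_pt_lim (gfun psi dpsi) t
    ((cos t * gfun psi dpsi t - gfun psi dpsi t ^ 2 - 1 / 4) / sin t).
Proof.
  intros Ht.
  destruct Hpsi as [Hs _]. destruct (Hs t Ht) as [Hd [Hdd Hp]].
  pose proof (sin_pos_on_half_pi t Ht) as Hsin.
  pose proof (derivable_pt_lim_div (mult_fct sin dpsi) psi t _ _
     (derivable_pt_lim_mult sin dpsi t _ _ (derivable_pt_lim_sin t) Hdd) Hd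
     (Rgt_not_eq _ _ Hp)) as H.
  change (gfun psi dpsi) with (div_fct (mult_fct sin dpsi) psi).
  match goal with H : derivable_pt_lim _ _ ?L |- derivable_pt_lim _ _ ?L' =>
    replace L' with L; [exact H |] end.
  unfold div_fct, mult_fct, Rsqr. field. lra.
Qed.

Lemma gfun_continuous (t : R) : 0 < t <= PI / 2 ->
  continuity_pt (gfun psi dpsi) t.
Proof.
  intros Ht. apply derivable_continuous_pt. exact (exist _ _ (gfun_riccati t Ht)).
Qed.

Lemma gfun_half_pi : PI <= b < 2 * PI ->
  gfun psi dpsi (PI / 2) = / 2 * tan ((b - PI) / 4).
Proof.
  intros Hb. destruct Hpsi as [_ [H1 H2]].
  unfold gfun, tan. rewrite H1, H2, sin_PI2.
  assert (0 < cos ((b - PI) / 4)) by (apply cos_gt_0; pose proof PI_RGT_0; lra).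
  field. lra.
Qed.

End Riccati.

Lemma riccati_difference_linear (b1 b2 : R) (psi1 dpsi1 psi2 dpsi2 : R -> R) :
  psi_sol b1 psi1 dpsi1 -> psi_sol b2 psi2 dpsi2 ->
  forall t, 0 < t <= PI / 2 ->
  derivable_pt_lim (fun c => gfun psi2 dpsi2 c - gfun psi1 dpsi1 c) t
    ((gfun psi2 dpsi2 t - gfun psi1 dpsi1 t) *
     ((cos t - gfun psi1 dpsi1 t - gfun psi2 dpsi2 t) / sin t)).
Proof.
  intros S1 S2 t Ht.
  pose proof (sin_pos_on_half_pi t Ht) as Hsin.
  pose proof (derivable_pt_lim_minus (gfun psi2 dpsi2) (gfun psi1 dpsi1) t _ _
    (gfun_riccati b2 psi2 dpsi2 S2 t Ht) (gfun_riccati b1 psi1 dpsi1 S1 t Ht)) as H.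
  match goal with H : derivable_pt_lim _ _ ?L |- derivable_pt_lim _ _ ?L' =>
    replace L' with L; [exact H |] end.
  unfold minus_fct. field. lra.
Qed.

Theorem lemma4 (G1 G3 bcr b1 b2 : R) (psi1 dpsi1 psi2 dpsi2 : R -> R) :
  is_Gamma (1 / 4) G1 -> is_Gamma (3 / 4) G3 ->
  PI < bcr < 2 * PI ->
  tan ((bcr - PI) / 4) = 4 * (G3 / G1) ^ 2 ->
  PI <= b1 -> b1 < b2 -> b2 <= bcr ->
  psi_sol b1 psi1 dpsi1 -> psi_sol b2 psi2 dpsi2 ->
  forall t, 0 < t <= PI / 2 -> gfun psi1 dpsi1 t < gfun psi2 dpsi2 t.
Proof.
  intros _ _ Hbcr _ Hb1 H12 Hb2 S1 S2 t Ht.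
  pose proof PI_RGT_0.
  set (g1 := gfun psi1 dpsi1). set (g2 := gfun psi2 dpsi2).
  assert (Hend : 0 < g2 (PI / 2) - g1 (PI / 2)).
  { unfold g1, g2. rewrite (gfun_half_pi b1 psi1 dpsi1 S1), (gfun_half_pi b2 psi2 dpsi2 S2) by lra.
    assert (tan ((b1 - PI) / 4) < tan ((b2 - PI) / 4)) by (apply tan_increasing; lra).
    lra. }
  assert (Hh : forall c, t <= c <= PI / 2 ->
            continuity_pt (fun c => (cos c - g1 c - g2 c) / sin c) c).
  { intros c Hc. assert (Hc' : 0 < c <= PI / 2) by lra.
    apply continuity_pt_div.
    - apply continuity_pt_minus; [apply continuity_pt_minus |].
      + apply continuity_cos.
      + exact (gfun_continuous b1 psi1 dpsi1 S1 c Hc').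
      + exact (gfun_continuous b2 psi2 dpsi2 S2 c Hc').
    - apply continuity_sin.
    - pose proof (sin_pos_on_half_pi c Hc'). lra. }
  pose proof (linear_ode_pos_backward (fun c => g2 c - g1 c) _ t (PI / 2) ltac:(lra)
    (fun c Hc => riccati_difference_linear b1 b2 psi1 dpsi1 psi2 dpsi2 S1 S2 c ltac:(lra))
    Hh Hend).
  lra.
Qed.
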